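(* Let $m\ge 2$, $n=m+1$, and let $A$ be the $n\times n$ matrix of the star graph with center $1$ and leaves $2,\dots,n$, each node carrying a loop of weight $\sqrt m$: $A_{ii}=\sqrt m$ for all $i$, $A_{1j}=A_{j1}=1$ for $j=2,\dots,n$, and all other entries $0$. Let $d=A\mathbb{1}$ and $M_{\mathrm{NG}}=A-\frac{1}{\mathbb{1}^{\mathsf T}d}dd^{\mathsf T}$. Then the largest eigenvalue of $M_{\mathrm{NG}}$ equals $\sqrt m$, it has multiplicity exactly $m-1$, and its eigenspace is $\{x\in\mathbb{R}^n: x_1=0,\ \sum_{i=1}^n x_i=0\}$. Consequently, for every eigenvector $x$ of $M_{\mathrm{NG}}$ associated with $\sqrt m$, the subgraph induced by $\{i: x_i>0\}$ is connected if and only if this set consists of a single node.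
   Context: $\mathbb{1}$ denotes the all-ones vector. The subgraph induced by a set $S$ of nodes is connected if the graph on vertex set $S$ in which distinct $i,j$ are adjacent iff $A_{ij}>0$ is connected. *)

From HB Require Import structures.
From mathcomp Require Import all_boot all_order all_algebra.
Set Implicit Arguments. Unset Strict Implicit. Unset Printing Implicit Defensive.
Import Order.TTheory GRing.Theory Num.Theory.
Local Open Scope ring_scope.

(* Star graph on 'I_m.+1 with center ord0 (node 1 in the paper) and leaves
   1..m (nodes 2..n in the paper); every node has a loop of weight sqrt m. *)
Definition starA (R : rcfType) (m : nat) : 'M[R]_(m.+1) :=
  \matrix_(i, j) (if i == j then Num.sqrt (m%:R : R)
                  else if (i == ord0) || (j == ord0) then 1 else 0).

Definition degvec (R : rcfType) (n : nat) (A : 'M[R]_n) : 'cV[R]_n :=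
  A *m const_mx 1.

Definition MNG (R : rcfType) (n : nat) (A : 'M[R]_n) : 'M[R]_n :=
  A - (\sum_i degvec A i 0)^-1 *: (degvec A *m (degvec A)^T).

Definition induced_rel (R : rcfType) (n : nat) (A : 'M[R]_n) (S : {set 'I_n}) : rel 'I_n :=
  fun i j => [&& i \in S, j \in S, i != j & 0 < A i j].

Definition induced_connected (R : rcfType) (n : nat) (A : 'M[R]_n) (S : {set 'I_n}) : Prop :=
  forall i j, i \in S -> j \in S -> connect (induced_rel A S) i j.

From HB Require Import structures.
From mathcomp Require Import all_boot all_order all_algebra.
From mathcomp Require Import ring lra.
Import Order.TTheory GRing.Theory Num.Theory.
Set Implicit Arguments. Unset Strict Implicit. Unset Printing Implicit Defensive.
Local Open Scope ring_scope.

(* Write s = sqrt m.  The degree vector is d = (s + 1) (s, 1, ..., 1), and once m is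
   replaced by s^2 every quantity below is polynomial in s.  The all-ones vector lies
   in the kernel of M_NG, and the vectors e_k - e_(k+1) (1 < k < n) span the
   s-eigenspace.  Completed by 1 and e_n they form a basis in which M_NG is
   triangular, and the trace forces the remaining eigenvalue to be 0, so
   char M_NG = X^2 (X - s)^(m-1).  An s-eigenvector vanishes at the centre, so its
   positive support consists of pairwise non-adjacent leaves; it is nonempty because
   the entries of a nonzero s-eigenvector sum to 0. *)

Lemma sum_nat_eq (R : nzSemiRingType) n k : (k < n)%N ->
  \sum_(i < n) (((i : nat) == k)%:R : R) = 1.
Proof.
move=> lt_kn; rewrite (bigD1 (Ordinal lt_kn)) //= eqxx big1 ?addr0 // => i.
by rewrite -val_eqE /= => /negbTE ->.
Qed.

Lemma char_poly_conj (F : fieldType) n (P M : 'M[F]_n) : P \in unitmx ->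
  char_poly (invmx P *m M *m P) = char_poly M.
Proof.
move=> Pu; rewrite /char_poly /char_poly_mx.
have -> : 'X%:M - map_mx polyC (invmx P *m M *m P) =
   map_mx polyC (invmx P) *m ('X%:M - map_mx polyC M) *m map_mx polyC P.
  rewrite mulmxBr mulmxBl !map_mxM; congr (_ - _).
  by rewrite mul_mx_scalar -scalemxAl -map_mxM mulVmx // map_mx1 scalemx1.
rewrite !det_mulmx !det_map_mx mulrC mulrA -rmorphM det_inv mulfV ?mul1r //.
by rewrite -unitfE -unitmxE.
Qed.

Lemma char_poly_trmx (R : comNzRingType) n (M : 'M[R]_n) :
  char_poly M^T = char_poly M.
Proof.
by rewrite /char_poly /char_poly_mx -[RHS]det_tr raddfB /= tr_scalar_mx map_trmx.
Qed.

(* If all columns of [P] but the last are eigenvectors of [M], then [P^-1 M P]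
   is upper triangular; its last diagonal entry is forced by the trace. *)
Lemma char_poly_eigencols (F : fieldType) n (M P : 'M[F]_n.+1) (lam : 'I_n -> F) :
  P \in unitmx ->
  (forall k, M *m col (widen_ord (leqnSn n) k) P = lam k *: col (widen_ord (leqnSn n) k) P) ->
  char_poly M = (\prod_k ('X - (lam k)%:P)) * ('X - (\tr M - \sum_k lam k)%:P).
Proof.
move=> Pu Pcol; set B := invmx P *m M *m P.
have Bcol k i : B i (widen_ord (leqnSn n) k) = lam k * (i == widen_ord (leqnSn n) k)%:R.
  have colB : col (widen_ord (leqnSn n) k) B = lam k *: col (widen_ord (leqnSn n) k) 1%:M.
    rewrite colE -!mulmxA -colE Pcol -scalemxAr colE mulmxA -colE mulVmx //.
  by have := congr1 (fun v : 'cV_n.+1 => v i 0) colB; rewrite !mxE.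
have trB : \tr B = \tr M by rewrite /B mxtrace_mulC mulmxA mulmxV // mul1mx.
have Bdiag k : B (widen_ord (leqnSn n) k) (widen_ord (leqnSn n) k) = lam k.
  by rewrite Bcol eqxx mulr1.
rewrite -(char_poly_conj M Pu) -char_poly_trmx char_poly_trig; last first.
  apply/is_trig_mxP => i j lt_ij; rewrite mxE.
  have lt_in : (i < n)%N by rewrite (leq_trans lt_ij) // -ltnS.
  have -> : i = widen_ord (leqnSn n) (Ordinal lt_in) by apply: val_inj.
  by rewrite Bcol -val_eqE /= gtn_eqF ?mulr0.
rewrite big_ord_recr /=; congr (_ * ('X - _%:P)).
  by apply: eq_bigr => k _; rewrite mxE Bdiag.
rewrite mxE -trB /mxtrace big_ord_recr /=.
under eq_bigr => k _ do rewrite Bdiag.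
by rewrite addrAC subrr add0r.
Qed.

Section ModularityMatrix.

Variables (R : rcfType) (n : nat) (A : 'M[R]_n).

Local Notation d := (degvec A).
Local Notation vol := (\sum_i degvec A i 0).

Lemma MNG_mulmx (x : 'cV[R]_n) :
  MNG A *m x = A *m x - (vol^-1 * \sum_i d i 0 * x i 0) *: d.
Proof.
rewrite /MNG mulmxBl -scalemxAl -mulmxA [d^T *m x]mx11_scalar mul_mx_scalar scalerA.
by congr (_ - (_ * _) *: _); rewrite !mxE; apply: eq_bigr => i _; rewrite mxE.
Qed.

Lemma MNG_mulmx1 : vol != 0 -> MNG A *m (const_mx 1 : 'cV[R]_n) = 0.
Proof.
move=> vol_neq0; rewrite MNG_mulmx -/(degvec A).
have -> : \sum_i d i 0 * (const_mx 1 : 'cV[R]_n) i 0 = vol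
  by apply: eq_bigr => i _; rewrite [const_mx _ _ _]mxE mulr1.
by rewrite mulVf // scale1r subrr.
Qed.

Lemma mxtrace_MNG : \tr (MNG A) = \tr A - vol^-1 * \sum_i d i 0 ^+ 2.
Proof.
rewrite /MNG raddfB /= mxtraceZ mxtrace_mulC /mxtrace big_ord1 !mxE.
by congr (_ - _ * _); apply: eq_bigr => i _; rewrite !mxE.
Qed.

End ModularityMatrix.

Lemma induced_connected_edgeless (R : rcfType) n (A : 'M[R]_n) (S : {set 'I_n}) :
  {in S &, forall i j, i != j -> A i j <= 0} ->
  induced_connected A S <-> (#|S| <= 1)%N.
Proof.
move=> edgeless.
have no_edge i j : induced_rel A S i j = false.
  rewrite /induced_rel; case/boolP: (i \in S) => //= iS; case/boolP: (j \in S) => //= jS.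
  by case: eqVneq => //= ij; rewrite ltNge edgeless.
split=> [conn | /card_le1_eqP S_le1 i j iS jS].
  apply/card_le1_eqP => i j iS jS.
  by have /connectP[[|k p] //=] := conn i j iS jS; rewrite no_edge.
by rewrite (S_le1 i j iS jS) connect0.
Qed.

Lemma sum_eq0_exists_gt0 (R : realDomainType) n (x : 'cV[R]_n) :
  x != 0 -> \sum_i x i 0 = 0 -> exists i, 0 < x i 0.
Proof.
move=> x_neq0 sum0; case: (pickP (fun i => 0 < x i 0)) => [i x_gt0 | no_pos].
  by exists i.
have xN_ge0 i : true -> 0 <= - x i 0 by rewrite oppr_ge0 leNgt no_pos.
have xN0 : forall i, true -> - x i 0 = 0.
  by apply/(psumr_eq0P xN_ge0); rewrite sumrN sum0 oppr0.
case/eqP: x_neq0; apply/matrixP => i j.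
by rewrite ord1 mxE -[LHS]opprK xN0 ?oppr0.
Qed.

Section StarGraph.

Variables (R : rcfType) (m : nat).

Local Notation s := (Num.sqrt (m%:R : R)).
Local Notation A := (starA R m).
Local Notation d := (degvec (starA R m)).
Local Notation M := (MNG (starA R m)).

Lemma sqr_sqrt_nat : s ^+ 2 = m%:R.
Proof. by rewrite sqr_sqrtr ?ler0n. Qed.

(* Rewrite with an explicit pattern: [m%:R] is itself [1 *+ m]. *)
Lemma mulrn_sqrt (x : R) : x *+ m = x * s ^+ 2.
Proof. by rewrite sqr_sqrt_nat mulr_natr. Qed.

Lemma starA_mulmx (x : 'cV[R]_m.+1) i :
  (A *m x) i 0 =
  s * x i 0 + (if i == ord0 then \sum_j x j 0 - x ord0 0 else x ord0 0).
Proof.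
rewrite mxE (bigD1 i) //= mxE eqxx; congr (_ + _).
under eq_bigr => j ji do rewrite mxE eq_sym (negbTE ji).
have [-> | i_neq0] := eqVneq i ord0.
  under eq_bigr => j _ do rewrite /= mul1r.
  by rewrite [X in _ = X - _](bigD1 ord0) //= addrAC subrr add0r.
rewrite (bigD1 ord0) 1?eq_sym //= mul1r big1 ?addr0 // => j /andP[_ j_neq0].
by rewrite (negbTE j_neq0) mul0r.
Qed.

Lemma degvec_starA i : d i 0 = (if i == ord0 then s else 1) * (s + 1).
Proof.
rewrite /degvec starA_mulmx !mxE mulr1.
under eq_bigr => j _ do rewrite mxE.
rewrite sumr_const card_ord -natr1 addrK.
by case: (i == ord0); rewrite ?mul1r // mulrDr mulr1 -expr2 sqr_sqrt_nat addrC.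
Qed.

Lemma sum_degvec_starA : \sum_i d i 0 = s * (s + 1) ^+ 2.
Proof.
rewrite big_ord_recl degvec_starA eqxx.
under eq_bigr => i _ do rewrite degvec_starA eq_sym (negbTE (neq_lift _ _)) mul1r.
by rewrite sumr_const card_ord [(s + 1) *+ m]mulrn_sqrt; ring.
Qed.

Lemma sum_sqr_degvec_starA : \sum_i d i 0 ^+ 2 = 2 * s ^+ 2 * (s + 1) ^+ 2.
Proof.
rewrite big_ord_recl degvec_starA eqxx.
under eq_bigr => i _ do rewrite degvec_starA eq_sym (negbTE (neq_lift _ _)) mul1r.
by rewrite sumr_const card_ord [(s + 1) ^+ 2 *+ m]mulrn_sqrt; ring.
Qed.

Lemma dot_degvec_starA (x : 'cV[R]_m.+1) :
  \sum_i d i 0 * x i 0 = (s + 1) * ((s - 1) * x ord0 0 + \sum_i x i 0).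
Proof.
rewrite big_ord_recl [\sum_i x i 0]big_ord_recl degvec_starA eqxx.
under eq_bigr => i _ do rewrite degvec_starA eq_sym (negbTE (neq_lift _ _)) mul1r.
by rewrite -mulr_sumr; ring.
Qed.

Lemma starA_leaves i j : i != ord0 -> j != ord0 -> i != j -> A i j = 0.
Proof. by move=> /negbTE i_neq0 /negbTE j_neq0 /negbTE ij; rewrite mxE ij i_neq0 j_neq0. Qed.

Hypothesis m_gt0 : (0 < m)%N.

Lemma sqrt_nat_gt0 : 0 < s.
Proof. by rewrite sqrtr_gt0 ltr0n. Qed.

Lemma sum_degvec_starA_gt0 : 0 < \sum_i d i 0.
Proof.
by rewrite sum_degvec_starA mulr_gt0 ?exprn_gt0 ?addr_gt0 ?sqrt_nat_gt0.
Qed.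

Lemma MNG_starA_eigenvectorP (x : 'cV[R]_m.+1) :
  M *m x = s *: x <-> x ord0 0 = 0 /\ \sum_i x i 0 = 0.
Proof.
have s_gt0 := sqrt_nat_gt0.
have vol_gt0 := sum_degvec_starA_gt0; rewrite sum_degvec_starA in vol_gt0.
set c := (\sum_i d i 0)^-1 * \sum_i d i 0 * x i 0.
have vol_c : s * (s + 1) ^+ 2 * c = (s + 1) * ((s - 1) * x ord0 0 + \sum_i x i 0).
  rewrite /c mulrA -sum_degvec_starA mulfV ?mul1r ?dot_degvec_starA //.
  by rewrite sum_degvec_starA gt_eqF.
have Mx i : (M *m x) i 0 =
    s * x i 0 + (if i == ord0 then \sum_j x j 0 - x ord0 0 else x ord0 0) - c * d i 0.
  rewrite MNG_mulmx -/c -(starA_mulmx x i).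
  by move: (A *m x) (degvec A) => Ax dA; rewrite !mxE.
have max_neq0 : (ord_max : 'I_m.+1) != ord0 by rewrite -val_eqE /= -lt0n.
split=> [Mx_eq | [x00 sx0]].
  have := congr1 (fun v : 'cV[R]_m.+1 => v ord0 0) Mx_eq.
  rewrite /= Mx degvec_starA eqxx mxE => e0.
  have := congr1 (fun v : 'cV[R]_m.+1 => v ord_max 0) Mx_eq.
  rewrite /= Mx degvec_starA (negbTE max_neq0) mxE => eM.
  (* e0 and eM give sum x - x_1 = c s (s + 1) and x_1 = c (s + 1); substituted
     into vol_c they yield s (s + 1)^2 c = 2 s (s + 1)^2 c. *)
  have c0 : c = 0.
    have : s * (s + 1) ^+ 2 * c = 0 by nra.
    by move/eqP; rewrite mulf_eq0 (gt_eqF vol_gt0) => /eqP.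
  by split; nra.
have c0 : c = 0.
  move: vol_c; rewrite x00 sx0 mulr0 addr0 mulr0 => /eqP.
  by rewrite mulf_eq0 (gt_eqF vol_gt0) => /eqP.
apply/matrixP => i j; rewrite ord1 Mx c0 mul0r subr0 mxE x00 sx0 subrr.
by case: (i == ord0); rewrite addr0.
Qed.

Lemma mxtrace_MNG_starA : \tr M = (m%:R - 1) * s.
Proof.
have trA : \tr A = m.+1%:R * s.
  rewrite /mxtrace; under eq_bigr => i _ do rewrite mxE eqxx.
  by rewrite sumr_const card_ord mulr_natl.
have s_gt0 := sqrt_nat_gt0.
rewrite mxtrace_MNG trA sum_degvec_starA sum_sqr_degvec_starA -natr1.
by field; rewrite !gt_eqF // addr_gt0.
Qed.

(* Columns: the all-ones vector, then e_k - e_(k+1); the last column is e_m because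
   the test [i == k.+1] never holds there. *)
Definition star_basis : 'M[R]_m.+1 :=
  \matrix_(i, k) (if k == ord0 then 1 else (i == k)%:R - ((i : nat) == k.+1)%:R).

Lemma star_basis_unit : star_basis \in unitmx.
Proof.
have trig : is_trig_mx star_basis.
  apply/is_trig_mxP => i j lt_ij; rewrite mxE.
  rewrite -val_eqE /= gtn_eqF ?(leq_ltn_trans _ lt_ij) //.
  by rewrite -val_eqE /= !ltn_eqF ?subrr // ltnW.
rewrite unitmxE det_trig // big1 ?unitr1 // => i _.
rewrite mxE eqxx; case: eqP => // _.
by rewrite ltn_eqF // subr0.
Qed.

Lemma star_basis_eigencol (k : 'I_m) :
  M *m col (widen_ord (leqnSn m) k) star_basis =
  (if (k : nat) == 0%N then 0 else s) *: col (widen_ord (leqnSn m) k) star_basis.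
Proof.
case: eqP => [k0 | /eqP k_neq0].
  have -> : col (widen_ord (leqnSn m) k) star_basis = const_mx 1.
    by apply/matrixP => i j; rewrite !mxE -val_eqE /= k0.
  by rewrite scale0r MNG_mulmx1 // gt_eqF ?sum_degvec_starA_gt0.
apply/MNG_starA_eigenvectorP; split.
  by rewrite !mxE -!val_eqE /= (negbTE k_neq0) eq_sym (negbTE k_neq0) subrr.
under eq_bigr => i _ do rewrite !mxE -!val_eqE /= (negbTE k_neq0).
by rewrite sumrB !sum_nat_eq ?subrr // ltnS // ltnW.
Qed.

Lemma char_poly_MNG_starA : char_poly M = 'X ^+ 2 * ('X - s%:P) ^+ (m - 1).
Proof.
rewrite (char_poly_eigencols star_basis_unit star_basis_eigencol).
have lam_prod : \prod_(k < m) ('X - (if (k : nat) == 0%N then 0 else s)%:P) =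
                'X * ('X - s%:P) ^+ (m - 1).
  rewrite -(big_mkord xpredT (fun k => 'X - (if k == 0%N then 0 else s)%:P)).
  rewrite big_ltn //= subr0 -prodr_const_nat.
  by congr (_ * _); apply: eq_big_nat => k /andP[k_gt0 _]; rewrite gtn_eqF.
have lam_sum : \sum_(k < m) (if (k : nat) == 0%N then 0 else s) = (m%:R - 1) * s.
  rewrite -(big_mkord xpredT (fun k => if k == 0%N then 0 else s)).
  rewrite big_ltn //= add0r -[m%:R - 1]/(m%:R - 1%:R) -natrB // mulr_natl -sumr_const_nat.
  by apply: eq_big_nat => k /andP[k_gt0 _]; rewrite gtn_eqF.
by rewrite lam_prod lam_sum mxtrace_MNG_starA subrr subr0 mulrAC -expr2.
Qed.

End StarGraph.

Theorem mainTheorem6 (R : rcfType) (m : nat) (hm : (2 <= m)%N) :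
  let A := starA R m in
  let M := MNG A in
  [/\ eigenvalue M (Num.sqrt (m%:R : R)),
      (forall a : R, eigenvalue M a -> a <= Num.sqrt (m%:R : R)),
      mup (Num.sqrt (m%:R : R)) (char_poly M) = (m - 1)%N,
      (forall x : 'cV[R]_(m.+1),
          M *m x = Num.sqrt (m%:R : R) *: x <-> x ord0 0 = 0 /\ \sum_i x i 0 = 0) &
      (forall x : 'cV[R]_(m.+1), x != 0 -> M *m x = Num.sqrt (m%:R : R) *: x ->
          induced_connected A [set i | 0 < x i 0] <-> #|[set i | 0 < x i 0]| = 1%N)].
Proof.
move=> A M; have m_gt0 : (0 < m)%N := ltnW hm.
have s_gt0 := sqrt_nat_gt0 R m_gt0.
have charM := char_poly_MNG_starA R m_gt0.
have root_charM a : root (char_poly M) a = (a == 0) || (a == Num.sqrt m%:R).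
  by rewrite charM rootM expr2 rootM rootX orbb -(subnSK hm) root_exp_XsubC.
split.
- by rewrite eigenvalue_root_char root_charM eqxx orbT.
- by move=> a; rewrite eigenvalue_root_char root_charM => /orP[] /eqP ->; [exact: ltW | ].
- by rewrite charM mupMr ?mup_XsubCX ?eqxx // expr2 rootM rootX orbb gt_eqF.
- exact: MNG_starA_eigenvectorP.
move=> x x_neq0 /(MNG_starA_eigenvectorP m_gt0) [x00 sum0].
set S := [set i | 0 < x i 0].
have pos_neq0 i : i \in S -> i != ord0.
  by rewrite inE; apply: contraTneq => ->; rewrite x00 ltxx.
rewrite induced_connected_edgeless; last first.
  by move=> i j iS jS ij; rewrite starA_leaves ?pos_neq0.
have [i xi_gt0] := sum_eq0_exists_gt0 x_neq0 sum0.
have S_gt0 : (0 < #|S|)%N by apply/card_gt0P; exists i; rewrite inE.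
by split=> [S_le1 | ->]; first by apply/eqP; rewrite eqn_leq S_le1.
Qed.
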